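(* Let $\lambda<\kappa$ be infinite cardinals with $\kappa\le\aleph_\omega$. Then every $(\lambda,\kappa)$-graph contains an $(\aleph_0,\kappa)$-subgraph.
   Context: For infinite cardinals $\lambda<\kappa$, a $(\lambda,\kappa)$-graph is a bipartite graph with bipartition $(A,B)$, $|A|=\lambda$, $|B|=\kappa$, in which every vertex $b\in B$ has infinitely many neighbours in $A$. An $(\aleph_0,\kappa)$-subgraph of such a graph is a subgraph with bipartition $(C,D)$, $C\subseteq A$, $D\subseteq B$, which is itself an $(\aleph_0,\kappa)$-graph. *)

From HB Require Import structures.
From mathcomp Require Import all_boot all_order all_algebra.
From mathcomp Require Import all_classical.
Set Implicit Arguments. Unset Strict Implicit. Unset Printing Implicit Defensive.
Local Open Scope classical_set_scope.
Local Open Scope card_scope.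

Definition card_lt (T U : Type) (A : set T) (B : set U) : Prop :=
  (A #<= B) /\ ~ (B #<= A).

(* is_aleph n A : |A| = aleph_n.
   aleph_0 = |nat|; aleph_{n+1} = the successor cardinal of aleph_n,
   i.e. the least cardinal strictly above aleph_n. *)
Fixpoint is_aleph (n : nat) (U : Type) (B : set U) : Prop :=
  match n with
  | 0 => B #= [set: nat]
  | n'.+1 => exists (T : Type) (A : set T),
      [/\ is_aleph n' A, card_lt A B &
          forall (Z : Type) (C : set Z), card_lt A C -> B #<= C]
  end.

Definition above_all_alephs (Z : Type) (C : set Z) : Prop :=
  forall n : nat, exists (T : Type) (A : set T), is_aleph n A /\ A #<= C.

(* |B| <= aleph_omega, where aleph_omega = sup_n aleph_n is the least
   cardinal above all aleph_n. *)
Definition le_aleph_omega (U : Type) (B : set U) : Prop :=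
  exists (W : Type) (S : set W),
    [/\ above_all_alephs S,
        (forall (Z : Type) (C : set Z), above_all_alephs C -> S #<= C)
      & B #<= S].

(* A bipartite graph with sides A : set T, B : set U and adjacency E.
   (lam,kap)-graph: |A| = lam, |B| = kap, every b in B has infinitely
   many neighbours in A. *)
Definition nbhd (T U : Type) (A : set T) (E : T -> U -> Prop) (b : U) : set T :=
  A `&` [set a | E a b].

(* For every b in B fix a countably infinite set N b of neighbours of b.  As
   |A| < |B| <= aleph_omega, |A| <= aleph_m for some m, and we show by induction
   on m that the N d, for d ranging over some D with |D| = |B|, have a countable
   union.  When |A| = aleph_(m+1), a well-order of A with initial segments of
   size <= aleph_m gives sets S a (a in A) of size <= aleph_m such that every
   countable subset of A, in particular every N b, lies in one of them: this is
   the uncountable cofinality of aleph_(m+1).  Pick such an index g b for each b;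
   a pigeonhole argument, which is where |B| <= aleph_omega is needed, gives
   countably many indices whose preimage under g still has size |B|.  The union
   of the corresponding S a has size aleph_m, so the induction hypothesis applies
   to it.  The cardinal arithmetic involved (comparability, and k * k = k for
   infinite k) is derived from Zorn's lemma. *)

From HB Require Import structures.
From mathcomp Require Import all_boot all_order all_algebra.
From mathcomp Require Import all_classical wochoice.
Local Open Scope classical_set_scope.
Local Open Scope card_scope.

Lemma card_le_inj {T U} {A : set T} {B : set U} (f : T -> U) :
  set_fun A B f -> set_inj A f -> A #<= B.
Proof.
move=> fAB finj; have [g] : $|{injfun A >-> B}| by apply/injfunPex; exists f.
exact: inj_card_le.
Qed.

Lemma card_le_exists_inj {T U} {A : set T} {B : set U} {a : T} : A a ->
  A #<= B -> exists2 f : T -> U, set_fun A B f & set_inj A f.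
Proof.
move=> Aa; elim/Ppointed: U => U in B *.
  by rewrite emptyE_subdef => /eqP A0; move: Aa; rewrite A0.
by move=> /pcard_leP /injfunPex.
Qed.

Lemma card_le_rel {T U} {A : set T} {B : set U} (r : set (T * U)) :
  (forall x y, r (x, y) -> B y) ->
  (forall x x' y, r (x, y) -> r (x', y) -> x = x') ->
  (forall x, A x -> exists y, r (x, y)) -> A #<= B.
Proof.
move=> rB rinj rtot; have [->|/set0P[a Aa]] := eqVneq A set0; first exact: card_ge0.
have [y0 _] := rtot a Aa.
have /choice[f fP] : forall x, exists y, A x -> r (x, y).
  by move=> x; have [/rtot[y]|] := pselect (A x); [exists y | exists y0].
apply: (card_le_inj f) => [x /fP/rB //|x x' /set_mem/fP rx /set_mem/fP rx' fxx'].
by apply: (rinj _ _ _ rx); rewrite fxx'.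
Qed.

Lemma card_le_setX {T1 T2 U1 U2} {A1 : set T1} {A2 : set T2}
    {B1 : set U1} {B2 : set U2} :
  A1 #<= B1 -> A2 #<= B2 -> A1 `*` A2 #<= B1 `*` B2.
Proof.
have [->|/set0P[a1 Aa1]] := eqVneq A1 set0; first by rewrite set0X.
have [->|/set0P[a2 Aa2]] := eqVneq A2 set0; first by rewrite setX0.
move=> /(card_le_exists_inj Aa1)[f1 f1fun f1inj].
move=> /(card_le_exists_inj Aa2)[f2 f2fun f2inj].
apply: (card_le_inj (fun p => (f1 p.1, f2 p.2))).
  by move=> [x y] [/= Ax Ay]; split; [exact: f1fun | exact: f2fun].
move=> [x y] [x' y'] /set_mem[/= Ax Ay] /set_mem[/= Ax' Ay'] [e1 e2].
rewrite (f1inj x x' (mem_set Ax) (mem_set Ax') e1).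
by rewrite (f2inj y y' (mem_set Ay) (mem_set Ay') e2).
Qed.

Lemma card_le_bigcup {I T K} {D : set I} {F : I -> set T} {S : set K} :
  D #<= S -> (forall i, D i -> F i #<= S) -> S `*` S #<= S ->
  \bigcup_(i in D) F i #<= S.
Proof.
move=> DS FS SS; apply: card_le_trans SS.
have -> : \bigcup_(i in D) F i = snd @` (D `*`` F).
  apply/seteqP; split=> [x [i Di Fix]|_ [[i x] [Di Fix] <-]]; last by exists i.
  by exists (i, x).
apply: card_le_trans (card_image_le _ _) _.
have [->|/set0P[[i0 x0] [Di0 _]]] := eqVneq (D `*`` F) set0; first exact: card_ge0.
have [e efun einj] := card_le_exists_inj Di0 DS.
have /choice[f fP] : forall i, exists f : T -> K,
    D i -> set_fun (F i) S f /\ set_inj (F i) f.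
  move=> i; have [Di|] := pselect (D i); last by exists (fun=> e i0).
  have [Fi0|/set0P[x Fix]] := eqVneq (F i) set0.
    by exists (fun=> e i0); rewrite Fi0 => _; split=> [x|x y /set_mem].
  by have [f] := card_le_exists_inj Fix (FS i Di); exists f.
apply: (card_le_inj (fun p => (e p.1, f p.1 p.2))).
  by move=> [i x] [/= Di Fix]; split; [exact: efun | exact: (fP i Di).1].
move=> [i x] [j y] /set_mem[/= Di Fix] /set_mem[/= Dj Fjy] [eij].
have {eij} eij : i = j by apply: einj => //; exact: mem_set.
by subst j => fxy; rewrite ((fP i Di).2 x y (mem_set Fix) (mem_set Fjy) fxy).
Qed.

Lemma card_le_setU {T K} {A1 A2 : set T} {S : set K} :
  [set: nat] #<= S -> S `*` S #<= S -> A1 #<= S -> A2 #<= S -> A1 `|` A2 #<= S.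
Proof.
move=> NS SS A1S A2S.
have -> : A1 `|` A2 = \bigcup_(b in [set: bool]) (if b then A1 else A2).
  apply/seteqP; split=> [x [A1x|A2x]|x [[] _ ?]];
    by [exists true | exists false | left | right].
by apply: card_le_bigcup => //; [exact: card_le_trans (countableP _) NS | case].
Qed.

Lemma total_on_bigcup2 {T} {F : set (set T)} {x y : T} : total_on F subset ->
  (\bigcup_(X in F) X) x -> (\bigcup_(X in F) X) y -> exists2 X, F X & X x /\ X y.
Proof.
move=> Ftot [X FX Xx] [Y FY Yy].
have [XY|YX] := Ftot X Y FX FY; first by exists Y => //; split => //; exact: XY.
by exists X => //; split => //; exact: YX.
Qed.

(* [Zorn_bigcup] also asks [P] to hold for [set0], the union of the empty
   chain; apply it to [P] with [set0] adjoined. *)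
Lemma Zorn_bigcup_nonempty {T} {P : set (set T)} {A0 : set T} : P A0 ->
  (forall F : set (set T), F `<=` P -> total_on F subset -> F !=set0 ->
     P (\bigcup_(X in F) X)) ->
  exists A, P A /\ forall B, A `<` B -> ~ P B.
Proof.
move=> PA0 Pchain.
have [A [[->|PA] Amax]] : exists A, (A = set0 \/ P A) /\
    forall B, A `<` B -> ~ (B = set0 \/ P B).
- apply: Zorn_bigcup => F FP Ftot.
  have [[X FX PX]|noP] := pselect (exists2 X, F X & P X).
    right; have -> : \bigcup_(X in F) X = \bigcup_(X in F `&` P) X.
      apply/seteqP; split=> x [Y FY Yx]; last by exists Y => //; case: FY.
      by have [Y0|PY] := FP Y FY; [rewrite Y0 in Yx | exists Y].
    apply: Pchain; first by move=> ? [].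
      by move=> ? ? [? _] [? _]; exact: Ftot.
    by exists X.
  left; apply/seteqP; split=> x // [Y FY Yx].
  by have [Y0|PY] := FP Y FY; [rewrite Y0 in Yx | case: noP; exists Y].
- have [A00|/set0P[a A0a]] := eqVneq A0 set0.
    by exists set0; split=> [|B /Amax nPB PB]; [rewrite -A00 | apply: nPB; right].
  by case: (Amax A0); [split=> // /(_ a A0a) | right].
- by exists A; split=> // B /Amax nPB PB; apply: nPB; right.
Qed.

Lemma card_ge_nat_subset {T} {X : set T} :
  [set: nat] #<= X -> exists2 Y, Y `<=` X & Y #= [set: nat].
Proof.
move=> NX; have [f fX finj] := card_le_exists_inj (I : [set: nat] 0) NX.
by exists (range f); [move=> _ [n _ <-]; exact: fX | exact: inj_card_eq finj].
Qed.

Lemma card_le_total {T U} (A : set T) (B : set U) : A #<= B \/ B #<= A.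
Proof.
pose pinj (r : set (T * U)) := [/\ r `<=` A `*` B,
  forall x y y', r (x, y) -> r (x, y') -> y = y' &
  forall x x' y, r (x, y) -> r (x', y) -> x = x'].
have [r [[rAB rfun rinj] rmax]] : exists r, pinj r /\ forall s, r `<` s -> ~ pinj s.
  apply: Zorn_bigcup => F Fpinj Ftot; split.
  - by move=> p [r /Fpinj[+ _ _]]; apply.
  - move=> x y y' rxy rxy'.
    by have [r /Fpinj[_ + _] []] := total_on_bigcup2 Ftot rxy rxy'; apply.
  - move=> x x' y rxy rx'y.
    by have [r /Fpinj[_ _ +] []] := total_on_bigcup2 Ftot rxy rx'y; apply.
have [Adom|/existsPNP[x Ax xfree]] := pselect (forall x, A x -> exists y, r (x, y)).
  by left; apply: (card_le_rel r) => // x y /rAB[].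
have [Bdom|/existsPNP[y By yfree]] := pselect (forall y, B y -> exists x, r (x, y)).
  right; apply: (card_le_rel [set p | r (p.2, p.1)]).
  - by move=> b a /rAB[].
  - by move=> b b' a; exact: rfun.
  - by move=> b /Bdom[a]; exists a.
case: (rmax (r `|` [set (x, y)])).
  split; first exact: subsetUl.
  by move=> /(_ (x, y) (or_intror erefl)) rxy; apply: xfree; exists y.
split.
- by move=> p [/rAB // | ->].
- move=> a b b' [rab|eab] [rab'|eab']; first exact: rfun rab rab'.
  + by case: eab' rab => -> _ rxb; case: xfree; exists b.
  + by case: eab rab' => -> _ rxb'; case: xfree; exists b'.
  + by case: eab => _ ->; case: eab' => _ ->.
- move=> a a' b [rab|eab] [ra'b|ea'b]; first exact: rinj rab ra'b.
  + by case: ea'b rab => _ -> ray; case: yfree; exists a.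
  + by case: eab ra'b => _ -> ra'y; case: yfree; exists a'.
  + by case: eab => -> _; case: ea'b => -> _.
Qed.

Section Hessenberg.
Context {T : Type} (X : set T).
Implicit Types r : set (T * T * T).

(* [r] is the graph of an injection [sq_dom r `*` sq_dom r -> sq_dom r], where
   [sq_dom r] is an infinite subset of [X]; ordered by inclusion, these graphs
   form the Zorn poset of Hessenberg's theorem. *)
Definition sq_dom r := [set a | exists z, r ((a, a), z)].

Record sq_inj r : Prop := SqInj {
  sq_dom_sub : sq_dom r `<=` X;
  sq_dom_infinite : [set: nat] #<= sq_dom r;
  sq_dom_closed : forall a b z, r ((a, b), z) ->
    [/\ sq_dom r a, sq_dom r b & sq_dom r z];
  sq_total : forall a b, sq_dom r a -> sq_dom r b -> exists z, r ((a, b), z);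
  sq_functional : forall p z z', r (p, z) -> r (p, z') -> z = z';
  sq_injective : forall p p' z, r (p, z) -> r (p', z) -> p = p' }.
Arguments sq_dom_closed {r}.
Arguments sq_total {r}.
Arguments sq_functional {r}.
Arguments sq_injective {r}.

Lemma sq_inj_card {r} : sq_inj r -> sq_dom r `*` sq_dom r #<= sq_dom r.
Proof.
case=> _ _ closed tot _ inj; apply: (card_le_rel r) => [[a b] z /closed[]//||].
  exact: inj.
by move=> [a b] [/= Ya Yb]; exact: tot.
Qed.

Lemma sq_inj_exists : [set: nat] #<= X -> exists r, sq_inj r.
Proof.
move=> NX; have [Y YX /card_eqPle[YN NY]] := card_ge_nat_subset NX.
have [y0 Yy0] := infinite_setN0 ((infiniteP Y).2 NY).
have YY : Y `*` Y #<= Y.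
  have /card_eqPle[NN2N _] := card_nat2.
  by apply: card_le_trans (card_le_setX YN YN) (card_le_trans _ NY); rewrite setXTT.
have [k kY kinj] := card_le_exists_inj (conj Yy0 Yy0 : (Y `*` Y) (y0, y0)) YY.
pose r := [set q : T * T * T | (Y `*` Y) q.1 /\ q.2 = k q.1].
have domr : sq_dom r = Y.
  by apply/seteqP; split=> [a [_ [[]]]|a Ya] //; exists (k (a, a)).
exists r; split; rewrite ?domr //.
- by move=> a b z [[/= Ya Yb] ->]; split=> //; exact: (kY (a, b)).
- by move=> a b Ya Yb; exists (k (a, b)).
- by move=> p z z' [_ /= ->] [_ /= ->].
- move=> p p' z [Yp /= ->] [Yp' /= kpp'].
  exact: kinj (mem_set Yp) (mem_set Yp') kpp'.
Qed.

Lemma sq_inj_bigcup (F : set (set (T * T * T))) :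
  F `<=` sq_inj -> total_on F subset -> F !=set0 -> sq_inj (\bigcup_(r in F) r).
Proof.
move=> Fsq Ftot [r0 Fr0].
have domU a : sq_dom (\bigcup_(r in F) r) a <-> exists2 r, F r & sq_dom r a.
  by split=> [[z [r Fr rz]]|[r Fr [z rz]]]; [exists r => //; exists z | exists z, r].
split.
- by move=> a /domU[r /Fsq[+ _ _ _ _ _]]; apply.
- have [_ + _ _ _ _] := Fsq r0 Fr0; move/card_le_trans; apply.
  by apply: subset_card_le => a Ya; apply/domU; exists r0.
- move=> a b z [r Fr /(sq_dom_closed (Fsq r Fr))[Ya Yb Yz]].
  by split; apply/domU; exists r.
- move=> a b [za raz] [zb rbz].
  have [r Fr [{}raz {}rbz]] := total_on_bigcup2 Ftot raz rbz.
  have [z rz] := sq_total (Fsq r Fr) a b (ex_intro _ za raz) (ex_intro _ zb rbz).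
  by exists z, r.
- move=> p z z' rz rz'; have [r Fr [{}rz {}rz']] := total_on_bigcup2 Ftot rz rz'.
  exact: sq_functional (Fsq r Fr) _ _ _ rz rz'.
- move=> p p' z rz rz'; have [r Fr [{}rz {}rz']] := total_on_bigcup2 Ftot rz rz'.
  exact: sq_injective (Fsq r Fr) _ _ _ rz rz'.
Qed.

Section Extension.
Variables (r : set (T * T * T)) (Z : set T) (h : T * T -> T).
Let Y := sq_dom r.
Let W := (Y `|` Z) `*` (Y `|` Z) `\` Y `*` Y.
Hypotheses (rP : sq_inj r) (ZXY : Z `<=` X `\` Y).
Hypotheses (hfun : set_fun W Z h) (hinj : set_inj W h).
Let r' := r `|` [set q | W q.1 /\ q.2 = h q.1].

Let ZNY a : Z a -> ~ Y a. Proof. by move=> /ZXY[]. Qed.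

Lemma sq_dom_setU : sq_dom r' = Y `|` Z.
Proof.
apply/seteqP; split=> a.
  by move=> [z [raz|[[[[Ya|Za] _] _] _]]]; [left; exists z|left|right].
move=> [[z raz]|Za]; first by exists z; left.
by exists (h (a, a)); right; split=> //; split=> [|[/ZNY]]; [split; right|].
Qed.

Lemma sq_inj_setU : sq_inj r'.
Proof.
have [YX NY closed tot fn inj] := rP.
split; rewrite ?sq_dom_setU.
- by move=> a [/YX|/ZXY[]].
- by apply: card_le_trans NY _; apply: subset_card_le => a; left.
- move=> a b z [/closed[Ya Yb Yz]|[[[/= Ha Hb] nY] ->]]; first by split; left.
  by split=> //; right; exact: (hfun (a, b) (conj (conj Ha Hb) nY)).
- move=> a b Ha Hb; have [[Ya Yb]|nYab] := pselect (Y a /\ Y b).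
    by have [z raz] := tot a b Ya Yb; exists z; left.
  by exists (h (a, b)); right.
- move=> [a b] z z' [rz|[[_ nY] /= ->]] [rz'|[[_ nY'] /= ->]] //.
  + exact: fn rz rz'.
  + by case: nY'; have [] := closed _ _ _ rz.
  + by case: nY; have [] := closed _ _ _ rz'.
- move=> [a b] [a' b'] z [rz|[Wp /= ez]] [rz'|[Wp' /= ez']].
  + exact: inj rz rz'.
  + by have [_ _ /ZNY] := closed _ _ _ rz; case; rewrite ez'; exact: hfun.
  + by have [_ _ /ZNY] := closed _ _ _ rz'; case; rewrite ez; exact: hfun.
  + by apply: hinj (mem_set Wp) (mem_set Wp') _; rewrite -ez -ez'.
Qed.

End Extension.

(* Take a copy [Z] of [Y := sq_dom r] inside [X `\` Y]: there are at most
   |Y| = |Z| new pairs in [(Y `|` Z) `*` (Y `|` Z)], so they inject into [Z]. *)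
Lemma sq_inj_extend {r} : sq_inj r -> sq_dom r #<= X `\` sq_dom r ->
  exists2 r', r `<` r' & sq_inj r'.
Proof.
set Y := sq_dom r => rP YXY; have [YX NY closed _ _ _] := rP.
have [y0 Yy0] := infinite_setN0 ((infiniteP Y).2 NY).
have [g gXY ginj] := card_le_exists_inj Yy0 YXY.
pose Z := g @` Y.
have ZXY : Z `<=` X `\` Y by move=> _ [y Yy <-]; exact: gXY.
have /card_eqPle[ZY YZ] : Z #= Y := inj_card_eq ginj.
pose W := (Y `|` Z) `*` (Y `|` Z) `\` Y `*` Y.
have WZ : W #<= Z.
  have YZY : Y `|` Z #<= Y by apply: card_le_setU => //; exact: sq_inj_card.
  apply: card_le_trans (subset_card_le (@subDsetl _ _ _)) _.
  exact: card_le_trans (card_le_setX YZY YZY) (card_le_trans (sq_inj_card rP) YZ).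
have Zz0 : Z (g y0) by exists y0.
have Wz0 : W (g y0, g y0).
  by split=> [|[Yz _]]; [split; right | case: (ZXY _ Zz0)].
have [h hfun hinj] := card_le_exists_inj Wz0 WZ.
exists (r `|` [set q | W q.1 /\ q.2 = h q.1]); last exact: sq_inj_setU.
split; first exact: subsetUl.
move=> /(_ ((g y0, g y0), h (g y0, g y0))) rz0.
have [Yz _ _] := closed _ _ _ (rz0 (or_intror (conj Wz0 erefl))).
by case: (ZXY _ Zz0).
Qed.

Theorem card_setXX_le : [set: nat] #<= X -> X `*` X #<= X.
Proof.
move=> NX; have [r0 r0P] := sq_inj_exists NX.
have [r [rP rmax]] := Zorn_bigcup_nonempty r0P sq_inj_bigcup.
have [YX NY _ _ _ _] := rP.
have [/(sq_inj_extend rP)[r' /rmax]//|XYY] := card_le_total (sq_dom r) (X `\` sq_dom r).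
have XY : X #<= sq_dom r.
  apply: card_le_trans (card_le_setU NY (sq_inj_card rP) (card_lexx _) XYY).
  by apply: subset_card_le => x Xx; have [Yx|nYx] := pselect (sq_dom r x); [left|right].
apply: card_le_trans (card_le_setX XY XY) (card_le_trans (sq_inj_card rP) _).
exact: subset_card_le.
Qed.

End Hessenberg.

Lemma card_le_lt_trans {T U V} {A : set T} {B : set U} {C : set V} :
  A #<= B -> card_lt B C -> card_lt A C.
Proof.
move=> AB [BC nCB]; split=> [|CA]; first exact: card_le_trans BC.
by apply: nCB; exact: card_le_trans CA AB.
Qed.

Lemma card_lt_le_trans {T U V} {A : set T} {B : set U} {C : set V} :
  card_lt A B -> B #<= C -> card_lt A C.
Proof.
move=> [AB nBA] BC; split=> [|CA]; first exact: card_le_trans BC.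
by apply: nBA; exact: card_le_trans BC CA.
Qed.

Lemma is_aleph_infinite {n} {T} {K : set T} : is_aleph n K -> [set: nat] #<= K.
Proof.
elim: n T K => [|n IH] T K /=; first by case/card_eqPle.
by move=> [T' [A [/IH NA [AK _] _]]]; exact: card_le_trans NA AK.
Qed.

Lemma is_aleph_le {n} {T U} {K1 : set T} {K2 : set U} :
  is_aleph n K1 -> is_aleph n K2 -> K1 #<= K2.
Proof.
elim: n T U K1 K2 => [|n IH] T U K1 K2 /=.
  by move=> /card_eqPle[K1N _] /card_eqPle[_ NK2]; exact: card_le_trans K1N NK2.
move=> [T1 [A1 [hA1 _ K1min]]] [T2 [A2 [hA2 A2K2 _]]].
by apply: K1min; apply: card_le_lt_trans A2K2; exact: IH hA1 hA2.
Qed.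

Lemma is_aleph_setX {n} {T} {K : set T} : is_aleph n K -> K `*` K #<= K.
Proof. by move/is_aleph_infinite; exact: card_setXX_le. Qed.

Lemma is_aleph_ltS {n} {T U} {K : set T} {K' : set U} :
  is_aleph n K -> is_aleph n.+1 K' -> card_lt K K'.
Proof.
by move=> hK [T' [A [hA AK' _]]]; exact: card_le_lt_trans (is_aleph_le hK hA) AK'.
Qed.

Lemma is_alephS_le {n} {T U V} {K : set T} {K' : set U} {Y : set V} :
  is_aleph n K -> is_aleph n.+1 K' -> ~ (Y #<= K) -> K' #<= Y.
Proof.
move=> hK [T' [A [hA _ K'min]]] nYK; apply: K'min.
have AK := is_aleph_le hA hK.
have [YK|KY] := card_le_total Y K; first by case: nYK.
split=> [|YA]; first exact: card_le_trans AK KY.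
by apply: nYK; exact: card_le_trans YA AK.
Qed.

Lemma is_aleph_leq {i j} {T U} {K : set T} {K' : set U} :
  (i <= j)%N -> is_aleph i K -> is_aleph j K' -> K #<= K'.
Proof.
elim: j U K' => [|j IH] U K'; first by rewrite leqn0 => /eqP -> /is_aleph_le; apply.
rewrite leq_eqVlt => /orP[/eqP -> /is_aleph_le|]; first by apply.
rewrite ltnS => ij hK [T2 [A2 [hA2 [A2K' _] _]]].
exact: card_le_trans (IH _ _ ij hK hA2) A2K'.
Qed.

Lemma le_aleph_omega_le {U V} {B : set U} {B' : set V} :
  B' #<= B -> le_aleph_omega B -> le_aleph_omega B'.
Proof.
by move=> B'B [W [S [SA Smin BS]]]; exists W, S; split=> //; exact: card_le_trans BS.
Qed.

Lemma lt_aleph_omega_le_aleph {T U} {A : set T} {B : set U} :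
  card_lt A B -> le_aleph_omega B ->
  exists n Tn (K : set Tn), is_aleph n K /\ A #<= K.
Proof.
move=> [AB nBA] [W [S [SA Smin BS]]]; apply: contrapT => noK.
apply: nBA; apply: card_le_trans BS (Smin _ _ _) => n.
have [Tn [K [hK _]]] := SA n; exists Tn, K; split=> //.
by have [AK|//] := card_le_total A K; case: noK; exists n, Tn, K.
Qed.

Lemma uncountable_le_aleph_eq_alephS {k} {U Tk} {B : set U} {K : set Tk} :
  ~ countable B -> is_aleph k K -> B #<= K ->
  exists n Tn (K' : set Tn), is_aleph n.+1 K' /\ B #= K'.
Proof.
move=> ncB; elim: k Tk K => [|k IH] Tk K hK BK.
  by case: ncB; apply: card_le_trans BK _; case/card_eqPle: hK.
have [Tk' [K' [hK' _ _]]] := hK.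
have [/(IH _ _ hK')//|nBK'] := pselect (B #<= K').
exists k, Tk, K; split=> //; apply/card_eqPle; split=> //.
exact: is_alephS_le hK' hK nBK'.
Qed.

Lemma regular_pigeonhole {n} {T U Tk Tk'} {K : set Tk} {K' : set Tk'}
    {A : set T} {B : set U} {g : U -> T} :
  is_aleph n K -> is_aleph n.+1 K' -> A #<= K -> K' #<= B -> set_fun B A g ->
  exists2 x, A x & K' #<= B `&` g @^-1` [set x].
Proof.
move=> hK hK' AK K'B gBA; apply: contrapT => nofiber.
have fiberK x : A x -> B `&` g @^-1` [set x] #<= K.
  by move=> Ax; apply: contrapT => /(is_alephS_le hK hK') ?; apply: nofiber; exists x.
have BK : B #<= K.
  apply: card_le_trans (card_le_bigcup AK fiberK (is_aleph_setX hK)).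
  by apply: subset_card_le => b Bb; exists (g b); [exact: gBA | split].
by case: (is_aleph_ltS hK hK') => _; apply; exact: card_le_trans K'B BK.
Qed.

Lemma countable_pigeonhole {T U} {A : set T} {B : set U} {g : U -> T} :
  card_lt A B -> le_aleph_omega B -> ~ countable B -> set_fun B A g ->
  exists2 X, X `<=` A /\ countable X & B #<= B `&` g @^-1` X.
Proof.
move=> ltAB leB ncB gBA.
(* Either |B| = aleph_(n+1), and a single fibre of [g] is large, or |B| is
   above every aleph_n, and fibres of size aleph_(j+n+1) for all n exhaust it. *)
have [[n [Tn [K [hK /card_eqPle[BK KB]]]]]|notS] :=
  pselect (exists n Tn (K : set Tn), is_aleph n.+1 K /\ B #= K).
  have [Tn' [K' [hK' _ _]]] := hK.
  have AK' : A #<= K'.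
    apply: contrapT => /(is_alephS_le hK' hK) KA.
    by case: ltAB => _; apply; exact: card_le_trans BK KA.
  have [x Ax fiber] := regular_pigeonhole hK' hK AK' KB gBA.
  exists [set x]; first by split; [move=> _ -> | exact: countable1].
  apply: card_le_trans BK (card_le_trans fiber _).
  by apply: subset_card_le => b [Bb gbx]; split.
have alephB k Tk (K : set Tk) : is_aleph k K -> K #<= B.
  move=> hK; have [//|BK] := card_le_total K B.
  by case: notS; exact: uncountable_le_aleph_eq_alephS ncB hK BK.
have [j [Tj [Kj [hKj AKj]]]] := lt_aleph_omega_le_aleph ltAB leB.
have [W [S [SA Smin BS]]] := leB.
have /choice[x xP] : forall n, exists x, A x /\
    exists Tk (K : set Tk), is_aleph (j + n).+1 K /\ K #<= B `&` g @^-1` [set x].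
  move=> n; have [Tk [K [hK _]]] := SA (j + n).+1.
  have [Tk' [K' [hK' _ _]]] := hK.
  have AK' : A #<= K' by apply: card_le_trans AKj (is_aleph_leq (leq_addr n j) hKj hK').
  have [x Ax fiber] := regular_pigeonhole hK' hK AK' (alephB _ _ _ hK) gBA.
  by exists x; split=> //; exists Tk, K.
exists (range x).
  by split; [move=> _ [n _ <-]; exact: (xP n).1 | exact: card_image_le].
apply: card_le_trans BS (Smin _ _ _) => n.
have [Tn [K [hK _]]] := SA n; have [_ [Tk [K' [hK' fiber]]]] := xP n.
exists Tn, K; split=> //.
apply: card_le_trans (is_aleph_leq (leq_trans (leq_addl j n) (leqnSn _)) hK hK') _.
apply: card_le_trans fiber (subset_card_le _) => b [Bb /= ->].
by split=> //; exists n.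
Qed.

Lemma exists_well_order (T : Type) : exists R : T -> T -> Prop,
  [/\ forall x y, R x y \/ R y x, forall x y, R x y -> R y x -> x = y &
      forall P : set T, P !=set0 -> exists2 x, P x & forall y, P y -> R x y].
Proof.
have [R Rwo] := well_ordering_principle {classic T}.
have Rc : wo_chain R predT by move=> A _; exact: Rwo.
exists (fun x y => R x y); split.
- move=> x y; have := wo_chainW Rc (isT : x \in predT) (isT : y \in predT).
  by case/orP; [left | right].
- by move=> x y Rxy Ryx; apply: (wo_chain_antisymmetric Rc) => //; rewrite Rxy.
- move=> P [x0 Px0].
  have [|z [[Pz zmin] _]] := Rwo [pred x | `[< P x >]].
    by exists x0; rewrite inE.
  exists z; first by move: Pz; rewrite inE.
  by move=> y Py; apply: zmin; rewrite inE.
Qed.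

Lemma small_initial_segments {m T Tk Tk'} {K : set Tk} {K' : set Tk'}
    {A : set T} (R : T -> T -> Prop) :
  is_aleph m K -> is_aleph m.+1 K' -> A #<= K' ->
  (forall x y, R x y -> R y x -> x = y) ->
  (forall P : set T, P !=set0 -> exists2 x, P x & forall y, P y -> R x y) ->
  exists I (h : T -> T), [/\ I `<=` A, set_fun A I h, set_inj A h &
    forall x, I x -> A `&` [set y | R y x] #<= K].
Proof.
move=> hK hK' AK' Ranti Rmin.
have NK := is_aleph_infinite hK.
pose seg x := A `&` [set y | R y x].
have segK x : seg x `\ x #<= K -> seg x #<= K.
  move=> sK; have xK := card_le_trans (countable1 x) NK.
  apply: card_le_trans (card_le_setU NK (is_aleph_setX hK) sK xK).
  by apply: subset_card_le => y sy; have [->|nyx] := pselect (y = x); [right|left].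
pose big := [set x | A x /\ ~ (seg x `\ x #<= K)].
have [/Rmin[x0 [Ax0 big0] x0min]|small] := pselect (big !=set0); last first.
  exists A, id; split=> // x Ax; apply: segK; apply: contrapT => bigx.
  by apply: small; exists x.

(* the initial segment of [x0], the least point with a segment above aleph_m,
   has size at least aleph_(m+1) >= |A| *)
have AI := card_le_trans AK' (is_alephS_le hK hK' big0).
have [h hfun hinj] := card_le_exists_inj Ax0 AI.
exists (seg x0 `\ x0), h; split=> // [x [[]]//|x [[Ax Rxx0] nxx0]].
apply: segK; apply: contrapT => bigx.
by apply: nxx0; apply: Ranti Rxx0 (x0min x (conj Ax bigx)).
Qed.

Lemma countable_subsets_cover {m T Tk Tk'} {K : set Tk} {K' : set Tk'}
    {A : set T} :
  is_aleph m K -> is_aleph m.+1 K' -> A #<= K' -> ~ (A #<= K) ->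
  exists S : T -> set T, (forall a, A a -> S a `<=` A /\ S a #<= K) /\
    forall X, X `<=` A -> countable X -> exists2 a, A a & X `<=` S a.
Proof.
move=> hK hK' AK' nAK.
have [R [Rtot Ranti Rmin]] := exists_well_order T.
have [I [h [IA hAI hinj segK]]] := small_initial_segments R hK hK' AK' Ranti Rmin.
pose S a := A `&` [set b | R (h b) (h a)].
have SK a : A a -> S a `<=` A /\ S a #<= K.
  move=> Aa; split=> [b []//|]; apply: card_le_trans (segK _ (hAI a Aa)).
  apply: (card_le_inj h) => [b [Ab Rba]|b b' /set_mem[Ab _] /set_mem[Ab' _]].
    by split=> //; exact: IA (hAI b Ab).
  by apply: hinj; exact: mem_set.
exists S; split=> // X XA cX; apply: contrapT => noa; apply: nAK.
have AX : A `<=` \bigcup_(x in X) S x.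
  move=> a Aa; have /existsPNP[x Xx nSax] : ~ (forall x, X x -> S a x).
    by move=> XS; apply: noa; exists a.
  exists x => //; split=> //; have [Rhxa|//] := Rtot (h x) (h a).
  by case: nSax; split=> //; exact: XA.
apply: card_le_trans (subset_card_le AX) (card_le_bigcup _ _ (is_aleph_setX hK)).
- exact: card_le_trans cX (is_aleph_infinite hK).
- by move=> x Xx; exact: (SK x (XA x Xx)).2.
Qed.

Lemma large_subfamily_countable_union {m T U Tk} (N : U -> set T)
    {K : set Tk} {A : set T} {B : set U} :
  is_aleph m K -> A #<= K -> card_lt A B -> le_aleph_omega B -> ~ countable B ->
  (forall b, B b -> N b `<=` A /\ countable (N b)) ->
  exists2 D, D `<=` B /\ B #<= D & countable (\bigcup_(d in D) N d).
Proof.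
elim: m Tk K A B => [|m IH] Tk K A B hK AK ltAB leB ncB NA.
  have /card_eqPle[KN _] : K #= [set: nat] := hK.
  have UA : \bigcup_(b in B) N b `<=` A by move=> a [b Bb]; exact: (NA b Bb).1.
  exists B; first by split; [exact: subset_refl | exact: card_lexx].
  exact: card_le_trans (subset_card_le UA) (card_le_trans AK KN).
have [Tk' [K' [hK' _ _]]] := hK.
have [AK'|nAK'] := pselect (A #<= K'); first exact: IH hK' AK' ltAB leB ncB NA.
have [S [SAK Scover]] := countable_subsets_cover hK' hK AK nAK'.
have [a0 Aa0] : A !=set0.
  by apply/set0P/eqP => A0; apply: nAK'; rewrite A0; exact: card_ge0.
have /choice[g gP] : forall b, exists a, B b -> A a /\ N b `<=` S a.
  move=> b; have [Bb|] := pselect (B b); last by exists a0.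
  by have [a Aa NbS] := Scover _ (NA b Bb).1 (NA b Bb).2; exists a.
have [X [XA cX] BD0] := countable_pigeonhole ltAB leB ncB (fun b Bb => (gP b Bb).1).
pose A' := \bigcup_(x in X) S x.
have A'A : A' `<=` A by move=> a [x Xx]; exact: (SAK x (XA x Xx)).1.
have A'K' : A' #<= K'.
  apply: card_le_bigcup (is_aleph_setX hK').
    exact: card_le_trans cX (is_aleph_infinite hK').
  by move=> x Xx; exact: (SAK x (XA x Xx)).2.
have NA' : forall b, (B `&` g @^-1` X) b -> N b `<=` A' /\ countable (N b).
  move=> b [Bb Xgb]; split; last exact: (NA b Bb).2.
  by move=> a Nba; exists (g b) => //; exact: (gP b Bb).2.
have [D [DD0 D0D] cD] := IH _ _ A' _ hK' A'K'
  (card_le_lt_trans (subset_card_le A'A) (card_lt_le_trans ltAB BD0))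
  (le_aleph_omega_le (subset_card_le (@subIsetl _ _ _)) leB)
  (fun cD0 => ncB (card_le_trans BD0 cD0)) NA'.
exists D => //; split; [by move=> d /DD0[] | exact: card_le_trans BD0 D0D].
Qed.

Theorem corollary4p2 (T U : Type) (A : set T) (B : set U) (E : T -> U -> Prop) :
  infinite_set A ->
  card_lt A B ->
  le_aleph_omega B ->
  (forall b, B b -> infinite_set (nbhd A E b)) ->
  exists (C : set T) (D : set U),
    [/\ C `<=` A, D `<=` B, C #= [set: nat], D #= B &
        forall d, D d -> infinite_set (nbhd C E d)].
Proof.
move=> /infiniteP NA ltAB leB /(_ _ _)/infiniteP Nnbhd.
have ncB : ~ countable B.
  by move=> cB; case: ltAB => _; apply; exact: card_le_trans cB NA.
have /choice[N NP] : forall b, exists N : set T,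
    B b -> N `<=` nbhd A E b /\ N #= [set: nat].
  move=> b; have [/Nnbhd/card_ge_nat_subset[N]|] := pselect (B b); last by exists set0.
  by exists N.
have NA' b : B b -> N b `<=` A /\ countable (N b).
  by move=> /NP[Nnb /card_eqPle[cN _]]; split=> // a /Nnb[].
have [j [Tj [K [hK AK]]]] := lt_aleph_omega_le_aleph ltAB leB.
have [D [DB BD] cC] := large_subfamily_countable_union N hK AK ltAB leB ncB NA'.
have [d0 Dd0] : D !=set0.
  apply/set0P/eqP => D0; apply: ncB; move: BD; rewrite D0 => /card_le0P ->.
  exact: countable0.
exists (\bigcup_(d in D) N d), D; split=> //.
- by move=> a [d /DB Bd /(NP d Bd).1[]].
- apply/card_eqPle; split=> //.
  have /card_eqPle[_ NN] := (NP d0 (DB d0 Dd0)).2.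
  exact: card_le_trans NN (subset_card_le (bigcup_sup Dd0)).
- by apply/card_eqPle; split=> //; exact: subset_card_le.
- move=> d Dd; apply/infiniteP.
  have [Nnb /card_eqPle[_ NN]] := NP d (DB d Dd).
  apply: card_le_trans NN (subset_card_le _) => a Nda; split.
    exact: bigcup_sup Dd _ Nda.
  by have [] := Nnb a Nda.
Qed.
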